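(* Suppose the sequence $\{\mathcal{G}[k]\}_{k\ge0}$ satisfies the joint strong-connectivity assumption with parameter $T$. Then for every substate $j\in\{1,\dots,N\}$, under the freshness-index rules, $\tau^{(j)}_i[k]\neq\omega$ for all $k\ge (N-1)T$ and all $i\in\mathcal{V}$.
   Context: Graphs. Nodes $\mathcal{V}=\{1,\dots,N\}$. At each time $k\in\mathbb{N}=\{0,1,2,\dots\}$ there is a directed graph $\mathcal{G}[k]=(\mathcal{V},\mathcal{E}[k])$; $(i,j)\in\mathcal{E}[k]$ means node $i$ can send information to node $j$ at time $k$. $\mathcal{N}_i[k]=\{l\neq i:(l,i)\in\mathcal{E}[k]\}$ is the set of neighbors of $i$ at time $k$. The union graph over an interval of times has vertex set $\mathcal{V}$ and edge set the union of the edge sets over that interval. Joint strong-connectivity assumption: there is $T\in\mathbb{N}_+=\{1,2,\dots\}$ such that for every $k\in\mathbb{N}$ the union graph over $[kT,(k+1)T)$ is strongly connected. Freshness indices. For each substate index $j\in\{1,\dots,N\}$ (node $j$ being the source node of substate $j$) and node $i$, node $i$ keeps $\tau^{(j)}_i[k]\in\{\omega\}\cup\mathbb{N}$, where $\omega$ is a special symbol. Initialization: $\tau^{(j)}_j[0]=0$, $\tau^{(j)}_i[0]=\omega$ for $i\neq j$. The source keeps $\tau^{(j)}_j[k]=0$ for all $k$. For $i\neq j$, let $\mathcal{M}^{(j)}_i[k]=\{l\in\mathcal{N}_i[k]:\tau^{(j)}_l[k]\neq\omega\}$. Case 1, $\tau^{(j)}_i[k]=\omega$: if $\mathcal{M}^{(j)}_i[k]\neq\emptyset$,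 let $u$ be any minimizer of $\tau^{(j)}_l[k]$ over $l\in\mathcal{M}^{(j)}_i[k]$ and set $\tau^{(j)}_i[k+1]=\tau^{(j)}_u[k]+1$; otherwise set $\tau^{(j)}_i[k+1]=\omega$. Case 2, $\tau^{(j)}_i[k]\neq\omega$: let $\mathcal{F}^{(j)}_i[k]=\{l\in\mathcal{M}^{(j)}_i[k]:\tau^{(j)}_l[k]<\tau^{(j)}_i[k]\}$; if nonempty, let $u$ be any minimizer of $\tau^{(j)}_l[k]$ over $\mathcal{F}^{(j)}_i[k]$ and set $\tau^{(j)}_i[k+1]=\tau^{(j)}_u[k]+1$; otherwise set $\tau^{(j)}_i[k+1]=\tau^{(j)}_i[k]+1$. *)

(* Nodes V = {1..N} are modelled by 'I_N; omega is None. *)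
From mathcomp Require Import all_boot.
Set Implicit Arguments. Unset Strict Implicit. Unset Printing Implicit Defensive.

(* A time-varying digraph: E k l i = true iff (l,i) is an edge at time k,
   i.e. node l can send information to node i at time k. *)
Definition graph_seq (N : nat) := nat -> rel 'I_N.

Definition nbr N (E : graph_seq N) (k : nat) (i l : 'I_N) : bool :=
  (l != i) && E k l i.

Definition union_graph N (E : graph_seq N) (T k : nat) : rel 'I_N :=
  fun a b => [exists t : 'I_T, E (k * T + t) a b].

Definition strongly_connected N (e : rel 'I_N) : Prop :=
  forall a b : 'I_N, connect e a b.

Definition joint_strong_connectivity N (E : graph_seq N) (T : nat) : Prop :=
  0 < T /\ forall k, strongly_connected (union_graph E T k).

(* One update step of node i (i <> source) at time k, given the current
   indices tk and the next value next. "Any minimizer u" is rendered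
   existentially; the resulting value tau_u+1 does not depend on the choice. *)
Definition fresh_step N (E : graph_seq N) (k : nat) (tk : 'I_N -> option nat)
  (i : 'I_N) (next : option nat) : Prop :=
  match tk i with
  | None =>
      (exists u n, nbr E k i u /\ tk u = Some n /\
         (forall l m, nbr E k i l -> tk l = Some m -> n <= m) /\
         next = Some n.+1)
      \/ ((forall l, nbr E k i l -> tk l = None) /\ next = None)
  | Some t =>
      (exists u n, nbr E k i u /\ tk u = Some n /\ n < t /\
         (forall l m, nbr E k i l -> tk l = Some m -> m < t -> n <= m) /\
         next = Some n.+1)
      \/ ((forall l m, nbr E k i l -> tk l = Some m -> t <= m) /\
          next = Some t.+1)
  end.

Definition freshness_traj N (E : graph_seq N) (j : 'I_N)
  (tau : nat -> 'I_N -> option nat) : Prop :=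
  (forall i, tau 0 i = if i == j then Some 0 else None) /\
  (forall k, tau k j = Some 0) /\
  (forall k i, i != j -> fresh_step E k (tau k) i (tau k.+1 i)).

From mathcomp Require Import all_boot.
From mathcomp Require Import zify.
Set Implicit Arguments. Unset Strict Implicit.

(* Once a node has a fresh index it keeps one, and a node with no index
   acquires one as soon as an informed node sends to it.  Over each window
   [mT, (m+1)T) the union graph is strongly connected, so some edge leaves
   the set of informed nodes while it is not everything: the informed set
   grows by at least one node per window, starting from the source alone.
   After N-1 windows all N nodes are informed. *)

Lemma connect_exit_edge (V : finType) (e : rel V) (A : {set V}) x y :
  connect e x y -> x \in A -> y \notin A ->
  exists a b, [/\ a \in A, b \notin A & e a b].
Proof.
move=> /connectP [p ep ->]; elim: p x ep => [|z p IHp] x /=; first by move=> _ ->.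
move=> /andP [exz ep] xA ylast.
case zA: (z \in A); first exact: IHp ep zA ylast.
by exists x, z; rewrite zA.
Qed.

Section Freshness.
Variables (N : nat) (E : graph_seq N) (j : 'I_N) (tau : nat -> 'I_N -> option nat).
Hypothesis tauP : freshness_traj E j tau.

Lemma fresh_stays k i : tau k i <> None -> tau k.+1 i <> None.
Proof.
case: tauP => _ [tau_j step].
case: (eqVneq i j) => [->|neq_ij]; first by rewrite !tau_j.
have := step k i neq_ij; rewrite /fresh_step.
case: (tau k i) => [t|//] next_step _.
by case: next_step => [[u [n [_ [_ [_ [_ ->]]]]]]|[_ ->]].
Qed.

Lemma fresh_mono k k' i : k <= k' -> tau k i <> None -> tau k' i <> None.
Proof.
move=> /subnK <-; elim: (k' - k) => [|d IHd] //= tau_ki.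
by rewrite addSn; apply/fresh_stays/IHd.
Qed.

Lemma fresh_spreads k a b :
  tau k a <> None -> a != b -> E k a b -> tau k.+1 b <> None.
Proof.
move=> tau_ka neq_ab Eab.
case tau_kb: (tau k b) => [t|]; first by apply: fresh_stays; rewrite tau_kb.
case: tauP => _ [tau_j step].
case: (eqVneq b j) => [eq_bj|neq_bj]; first by rewrite eq_bj tau_j in tau_kb.
have := step k b neq_bj; rewrite /fresh_step tau_kb.
case=> [[u [n [_ [_ [_ ->]]]]] //|[no_informed_nbr _]].
by move=> _; apply: tau_ka; apply: no_informed_nbr; apply/andP.
Qed.

Definition informed k := [set i | tau k i != None].

Lemma informedP k i : reflect (tau k i <> None) (i \in informed k).
Proof. by rewrite inE; apply: (iffP idP) => /eqP. Qed.

Lemma informed_source k : j \in informed k.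
Proof. by apply/informedP; case: tauP => _ [->]. Qed.

Lemma informed_subset k k' : k <= k' -> informed k \subset informed k'.
Proof. by move=> le_kk'; apply/subsetP => i /informedP /(fresh_mono le_kk') /informedP. Qed.

Variable T : nat.

Lemma informed_window_subset m : informed (m * T) \subset informed (m.+1 * T).
Proof. by rewrite informed_subset // leq_mul2r leqnSn orbT. Qed.

Hypothesis ETconn : joint_strong_connectivity E T.

Lemma informed_window_grows m :
  informed (m * T) != setT -> #|informed (m * T)| < #|informed (m.+1 * T)|.
Proof.
case: ETconn => _ conn; rewrite -properT => /properP [_ [b _ b_out]].
have [a [c [a_in c_out /existsP [t Eac]]]] :=
  connect_exit_edge (conn m j b) (informed_source _) b_out.
have neq_ac : a != c by apply: contraNneq c_out => <-.
have tau_c : tau (m * T + t).+1 c <> None.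
  by apply: fresh_spreads neq_ac Eac; apply/(fresh_mono (leq_addr _ _))/informedP.
have c_in : c \in informed (m.+1 * T).
  by apply/informedP/(fresh_mono _ tau_c); have := ltn_ord t; rewrite mulSn; lia.
have /subset_leq_card : c |: informed (m * T) \subset informed (m.+1 * T).
  by rewrite subUset sub1set c_in informed_window_subset.
by rewrite cardsU1 c_out.
Qed.

Lemma informed_card m : minn N m.+1 <= #|informed (m * T)|.
Proof.
elim: m => [|m IHm].
  by rewrite geq_min card_gt0; apply/orP; right; apply/set0Pn; exists j; apply: informed_source.
case: (eqVneq (informed (m.+1 * T)) setT) => [-> |not_full].
  by rewrite cardsT card_ord geq_minl.
have grows : #|informed (m * T)| < #|informed (m.+1 * T)|.
  apply: informed_window_grows; apply: contraNneq not_full => full.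
  by rewrite eqEsubset subsetT -full informed_window_subset.
by apply: leq_trans grows; move: IHm; rewrite /minn; case: ifP; case: ifP; lia.
Qed.

End Freshness.

Theorem lemma3 (N T : nat) (E : graph_seq N) :
  joint_strong_connectivity E T ->
  forall (j : 'I_N) (tau : nat -> 'I_N -> option nat),
    freshness_traj E j tau ->
    forall k : nat, (N - 1) * T <= k -> forall i : 'I_N, tau k i <> None.
Proof.
move=> ETconn j tau tauP k le_k i.
have all_informed : informed tau ((N - 1) * T) = setT.
  apply/eqP; rewrite eqEcard subsetT cardsT card_ord /=.
  apply: leq_trans (informed_card tauP ETconn (N - 1)).
  by have := ltn_ord j; rewrite /minn; case: ifP; lia.
apply: (fresh_mono tauP le_k); apply/informedP.
by rewrite all_informed in_setT.
Qed.
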